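(* For every even integer $k\geq 2$, there are infinitely many positive integers $n$ such that $\sum_{i=0}^{k-1} \lambda(n+i)=0$, where $\lambda$ is the Liouville function.
   Context: The Liouville function is $\lambda(n)=(-1)^{\Omega(n)}$, where $\Omega(n)$ is the number of prime factors of $n$ counted with multiplicity. *)

From mathcomp Require Import all_boot all_algebra.
Set Implicit Arguments. Unset Strict Implicit. Unset Printing Implicit Defensive.
Import GRing.Theory Num.Theory.
Local Open Scope ring_scope.

(* Omega n = number of prime factors of n counted with multiplicity
   (Omega 1 = 0; the value at 0 is irrelevant, as only positive n are used). *)
Definition bigOmega (n : nat) : nat := (\sum_(p <- primes n) logn p n)%N.

Definition liouville (n : nat) : int := (-1) ^+ bigOmega n.

(* Write L(y) = sum_(d <= y) lambda(d) and S_k(n) = lambda(n) + ... + lambda(n + k - 1), so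
   that L(y + k) = L(y) + S_k(y + 1).  Since sum_(d | n) lambda(d) is 0 or 1, the sum
   T(x) = sum_(d <= x) lambda(d) floor(x/d) = sum_(n <= x) sum_(d | n) lambda(d) lies in
   [0, x]; on the other hand T(x) = sum_(q <= x) L(floor(x/q)).  If eps S_k(n) >= 1 for
   all large n, with eps = +-1, then eps L(y) >= y/k - O(1), whence
   k eps T(x) >= sum_(q <= x) floor(x/q) - O(x), which grows like x log x: a contradiction.
   So S_k takes values <= 0 and values >= 0 beyond any bound; for even k it is even and
   moves by at most 2 at each step, so it vanishes in between. *)

From mathcomp Require Import all_boot all_order all_algebra zify.
From Stdlib Require Import Classical.
Import Order.TTheory GRing.Theory Num.Theory.
Local Open Scope ring_scope.

Lemma bigOmega_sum_logn n B : (n < B)%N ->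
  bigOmega n = (\sum_(0 <= q < B) logn q n)%N.
Proof.
move=> nB; rewrite /bigOmega -(filter_pi_of nB) big_filter big_mkcond /=.
apply: eq_bigr => q _; case: ifP => // q_n.
by apply/esym/eqP; rewrite eqn0Ngt logn_gt0 q_n.
Qed.

Lemma bigOmegaM m n : (0 < m)%N -> (0 < n)%N ->
  bigOmega (m * n) = (bigOmega m + bigOmega n)%N.
Proof.
move=> m0 n0.
rewrite !(@bigOmega_sum_logn _ (m * n).+1) ?ltnS ?leq_pmulr ?leq_pmull //.
rewrite -big_split /=.
by apply: eq_bigr => q _; rewrite lognM.
Qed.

Lemma liouvilleM m n : (0 < m)%N -> (0 < n)%N ->
  liouville (m * n) = liouville m * liouville n.
Proof. by move=> m0 n0; rewrite /liouville bigOmegaM // exprD. Qed.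

Lemma liouville_prime p : prime p -> liouville p = -1.
Proof.
move=> p_pr; rewrite /liouville /bigOmega primes_prime // big_seq1.
by rewrite logn_prime // eqxx expr1.
Qed.

Lemma liouville1 : liouville 1 = 1.
Proof. by rewrite /liouville /bigOmega big_nil expr0. Qed.

Lemma liouville_sign n : liouville n = 1 \/ liouville n = -1.
Proof. by rewrite /liouville -signr_odd; case: odd; [right | left]. Qed.

Lemma normr_liouville n : `|liouville n| = 1.
Proof. by case: (liouville_sign n) => ->. Qed.

Lemma divisors_filter_ndvd p N : ~~ (p %| N)%N ->
  [seq d <- divisors N | ~~ (p %| d)%N] = divisors N.
Proof.
move=> p_N; have N_gt0 : (0 < N)%N by case: N p_N; rewrite ?dvdn0.
apply/all_filterP/allP => d; rewrite -dvdn_divisors // => d_N.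
by apply: contra p_N => /dvdn_trans; apply.
Qed.

Section DivisorsMulPrime.

Variables (p N : nat).
Hypotheses (p_pr : prime p) (N_gt0 : (0 < N)%N).

Let p_gt0 : (0 < p)%N := prime_gt0 p_pr.
Let Np_gt0 : (0 < N * p)%N. Proof. by rewrite muln_gt0 N_gt0. Qed.

Lemma divisors_mul_prime_coprime :
  [seq d <- divisors (N * p) | ~~ (p %| d)%N] = [seq d <- divisors N | ~~ (p %| d)%N].
Proof.
apply: (irr_sorted_eq ltn_trans ltnn) => [||d].
- exact/(sorted_filter ltn_trans)/sorted_divisors_ltn.
- exact/(sorted_filter ltn_trans)/sorted_divisors_ltn.
rewrite !mem_filter -!dvdn_divisors //.
case p_d: (p %| d)%N => //=.
by rewrite Gauss_dvdl // coprime_sym prime_coprime // p_d.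
Qed.

Lemma divisors_mul_prime_multiples :
  [seq d <- divisors (N * p) | (p %| d)%N] = [seq (d * p)%N | d <- divisors N].
Proof.
apply: (irr_sorted_eq ltn_trans ltnn).
- exact/(sorted_filter ltn_trans)/sorted_divisors_ltn.
- rewrite sorted_map; apply: sub_sorted (sorted_divisors_ltn N) => a b /=.
  by rewrite ltn_pmul2r.
move=> d; rewrite mem_filter -dvdn_divisors //.
apply/andP/mapP => [[/dvdnP[e ->]] | [e e_N ->]].
  by rewrite dvdn_pmul2r // dvdn_divisors // => e_N; exists e.
by rewrite dvdn_mull // dvdn_pmul2r // dvdn_divisors.
Qed.

End DivisorsMulPrime.

Lemma sum_divisors_liouville_mul_prime p N : prime p -> (0 < N)%N ->
  \sum_(d <- divisors (N * p)) liouville d =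
  \sum_(d <- divisors N | ~~ (p %| d)%N) liouville d - \sum_(d <- divisors N) liouville d.
Proof.
move=> p_pr N_gt0; rewrite (bigID (fun d => (p %| d)%N)) /= addrC.
rewrite -[X in X + _]big_filter -[X in _ + X]big_filter -[in RHS]big_filter.
rewrite divisors_mul_prime_coprime // divisors_mul_prime_multiples // big_map -sumrN.
congr (_ + _); apply: eq_big_seq => d; rewrite -dvdn_divisors // => d_N.
rewrite liouvilleM ?(prime_gt0 p_pr) ?(dvdn_gt0 N_gt0 d_N) //.
by rewrite (liouville_prime _ p_pr) mulrN1.
Qed.

Lemma sum_divisors_liouville_ge0_le1 n : (0 < n)%N ->
  0 <= \sum_(d <- divisors n) liouville d <= 1.
Proof.
elim/ltn_ind: n => n IH n_gt0; have [n_le1 | n_gt1] := leqP n 1.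
  have -> : n = 1%N by lia.
  have -> : divisors 1 = [:: 1%N] by [].
  by rewrite big_seq1 liouville1.
have p_pr := pdiv_prime n_gt1; set p := pdiv n in p_pr *.
have [N n_eq] := dvdnP (pdiv_dvd n); rewrite -/p in n_eq.
have N_gt0 : (0 < N)%N by move: n_gt0; rewrite n_eq muln_gt0 => /andP[].
rewrite n_eq sum_divisors_liouville_mul_prime //.
(* The sum vanishes at N p when p does not divide N, and is the same at M p^2 as at M. *)
have [p_N | p_nN] := boolP (p %| N)%N; last first.
  by rewrite -big_filter divisors_filter_ndvd // subrr lexx ler01.
have [M N_eq] := dvdnP p_N.
have M_gt0 : (0 < M)%N by move: N_gt0; rewrite N_eq muln_gt0 => /andP[].
rewrite [in X in X - _]N_eq -big_filter divisors_mul_prime_coprime // big_filter.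
rewrite N_eq sum_divisors_liouville_mul_prime // opprB addrC subrK.
by apply: IH => //; have := prime_gt1 p_pr; rewrite n_eq N_eq; nia.
Qed.

Lemma divisors_iota n : (0 < n)%N ->
  divisors n = [seq d <- index_iota 1 n.+1 | (d %| n)%N].
Proof.
move=> n_gt0; apply: (irr_sorted_eq ltn_trans ltnn) => [||d].
- exact: sorted_divisors_ltn.
- exact/(sorted_filter ltn_trans)/iota_ltn_sorted.
rewrite mem_filter mem_index_iota -dvdn_divisors //.
by case d_n: (d %| n)%N; rewrite //= ltnS (dvdn_gt0 n_gt0 d_n) (dvdn_leq n_gt0 d_n).
Qed.

Lemma big_nat_mul_leq_divn (R : nmodType) (F : nat -> R) x d : (0 < d)%N ->
  \sum_(1 <= i < x.+1 | (i * d <= x)%N) F i = \sum_(1 <= i < (x %/ d).+1) F i.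
Proof.
move=> d_gt0; rewrite [RHS](big_nat_widen _ _ x.+1) ?ltnS ?leq_div //.
by apply: eq_bigl => i; rewrite ltnS leq_divRL.
Qed.

Definition liouville_sum (y : nat) : int := \sum_(1 <= d < y.+1) liouville d.

Definition liouville_floor_sum (x : nat) : int :=
  \sum_(1 <= d < x.+1) liouville d *+ (x %/ d)%N.

Definition divisor_summatory (x : nat) : nat := (\sum_(1 <= q < x.+1) x %/ q)%N.

Lemma liouville_floor_sum_divisors x :
  liouville_floor_sum x = \sum_(1 <= n < x.+1) \sum_(d <- divisors n) liouville d.
Proof.
elim: x => [|x IH]; first by rewrite /liouville_floor_sum !big_geq.
rewrite big_nat_recr //= -IH divisors_iota // big_filter big_mkcond /=.
rewrite /liouville_floor_sum.
under [in LHS]eq_big_nat => d /andP[d_gt0 _] do rewrite divnS // mulrnDr addrC.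
rewrite big_split /= [X in X + _ = _]big_nat_recr //= divn_small // mulr0n addr0.
by congr (_ + _); apply: eq_bigr => d _; rewrite mulrb.
Qed.

Lemma liouville_floor_sum_hyperbola x :
  liouville_floor_sum x = \sum_(1 <= q < x.+1) liouville_sum (x %/ q)%N.
Proof.
transitivity (\sum_(1 <= d < x.+1) \sum_(1 <= q < x.+1 | (q * d <= x)%N) liouville d).
  apply: eq_big_nat => d /andP[d_gt0 _].
  by rewrite big_nat_mul_leq_divn // sumr_const_nat subn1.
rewrite (exchange_big_dep_nat predT) //=.
apply: eq_big_nat => q /andP[q_gt0 _]; rewrite /liouville_sum -big_nat_mul_leq_divn //.
by apply: eq_bigl => d; rewrite mulnC.
Qed.

Lemma liouville_floor_sum_ge0_le x : 0 <= liouville_floor_sum x <= x%:Z.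
Proof.
have f01 n : (1 <= n < x.+1)%N -> 0 <= \sum_(d <- divisors n) liouville d <= 1.
  by case/andP=> n_gt0 _; exact: sum_divisors_liouville_ge0_le1.
rewrite liouville_floor_sum_divisors; apply/andP; split.
  by rewrite big_nat_cond sumr_ge0 // => n /andP[/f01/andP[]].
apply: le_trans (_ : \sum_(1 <= n < x.+1) 1 <= _).
  by apply: ler_sum_nat => n /f01/andP[].
by rewrite sumr_const_nat subn1 natz.
Qed.

Lemma divisor_summatory_double y :
  (2 * divisor_summatory y + y <= divisor_summatory (2 * y))%N.
Proof.
rewrite /divisor_summatory [X in (_ <= X)%N](big_cat_nat _ (n := y.+1)) /=; [|by []|lia].
have low : (2 * \sum_(1 <= q < y.+1) y %/ q <= \sum_(1 <= q < y.+1) (2 * y) %/ q)%N.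
  rewrite big_distrr !big_seq; apply: leq_sum => q; rewrite mem_index_iota => /andP[q_gt0 _].
  by rewrite leq_divRL // mulnAC -mulnA leq_mul2l mulnC leq_divM orbT.
have high : (y <= \sum_(y.+1 <= q < (2 * y).+1) (2 * y) %/ q)%N.
  apply: leq_trans (_ : \sum_(y.+1 <= q < (2 * y).+1) 1 <= _)%N.
    by rewrite sum_nat_const_nat; lia.
  rewrite !big_seq; apply: leq_sum => q; rewrite mem_index_iota => q_range.
  by rewrite divn_gt0; lia.
exact: leq_add low high.
Qed.

Lemma divisor_summatory_pow2 m : (m * 2 ^ m <= 2 * divisor_summatory (2 ^ m))%N.
Proof.
elim: m => [|m IH] //; have := divisor_summatory_double (2 ^ m).
by rewrite expnS; nia.
Qed.

Lemma divisor_summatory_superlinear c : exists x, (c * x < divisor_summatory x)%N.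
Proof.
exists (2 ^ c.*2.+1)%N; have := divisor_summatory_pow2 c.*2.+1.
have : (0 < 2 ^ c.*2.+1)%N by rewrite expn_gt0.
move: (2 ^ _)%N => x; nia.
Qed.

Definition liouville_window (k n : nat) : int := \sum_(i < k) liouville (n + i).

Lemma liouville_sum_addn y k :
  liouville_sum (y + k) = liouville_sum y + liouville_window k y.+1.
Proof.
rewrite /liouville_sum (big_cat_nat _ (n := y.+1)) //=; last by lia.
congr (_ + _); rewrite -[y.+1 in LHS]add0n big_addn subSS addKn big_mkord.
by apply: eq_bigr => i _; rewrite addnC.
Qed.

Lemma normr_liouville_sum y : `|liouville_sum y| <= y%:Z.
Proof.
rewrite (le_trans (ler_norm_sum _ _ _)) //.
under eq_bigr do rewrite normr_liouville.
by rewrite sumr_const_nat subn1 natz.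
Qed.

Lemma liouville_window_succ k n :
  liouville_window k n.+1 + liouville n = liouville_window k n + liouville (n + k).
Proof.
case: k => [|k]; first by rewrite /liouville_window !big_ord0 addn0.
have recr : liouville_window k.+1 n.+1 = liouville_window k n.+1 + liouville (n + k.+1).
  by rewrite /liouville_window big_ord_recr addSnnS.
have recl : liouville_window k.+1 n = liouville n + liouville_window k n.+1.
  rewrite /liouville_window big_ord_recl addn0; congr (_ + _).
  by apply: eq_bigr => i _; rewrite lift0 addnS addSn.
by rewrite recr recl; lia.
Qed.

Lemma liouville_window_step k n :
  `|liouville_window k n.+1 - liouville_window k n| <= 2.
Proof.
have -> : liouville_window k n.+1 - liouville_window k n = liouville (n + k) - liouville n.
  by have := liouville_window_succ k n; lia.
by rewrite (le_trans (ler_normB _ _)) // !normr_liouville.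
Qed.

Lemma liouville_window_parity k n : (2 %| liouville_window k n - k%:Z)%Z.
Proof.
elim: k => [|k IH]; first by rewrite /liouville_window big_ord0.
rewrite /liouville_window big_ord_recr /= -/(liouville_window k n).
have -> : liouville_window k n + liouville (n + k) - k.+1%:Z =
          (liouville_window k n - k%:Z) + (liouville (n + k) - 1) by lia.
by rewrite rpredD //; case: (liouville_sign (n + k)) => ->.
Qed.

Section EvenWalk.

Variable s : nat -> int.
Hypotheses (s_step : forall n, `|s n.+1 - s n| <= 2) (s_even : forall n, (2 %| s n)%Z).

Lemma even_walk_zero a d :
  s a <= 0 <= s (a + d)%N -> exists2 n, (a <= n <= a + d)%N & s n = 0.
Proof.
elim: d a => [|d IH] a /andP[sa_le0 sad_ge0].
  by exists a; rewrite ?addn0 ?leqnn //; apply/le_anti; rewrite sa_le0 -[a in s a]addn0.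
have [sa0 | sa_neq0] := eqVneq (s a) 0; first by exists a; rewrite ?leqnn ?leq_addr.
have sa1_le0 : s a.+1 <= 0.
  have /dvdzP[c sa_eq] := s_even a; have /ler_normlP[_] := s_step a.
  by move: sa_le0 sa_neq0; rewrite sa_eq; lia.
have [n /andP[a_lt_n n_le] sn0] : exists2 n, (a.+1 <= n <= a.+1 + d)%N & s n = 0.
  by apply: IH; rewrite sa1_le0 addSnnS.
by exists n; rewrite // (ltnW a_lt_n) -addSnnS.
Qed.

End EvenWalk.

Lemma even_walk_sign_change (s : nat -> int) a b :
  (forall n, `|s n.+1 - s n| <= 2) -> (forall n, (2 %| s n)%Z) ->
  s a * s b <= 0 -> exists2 n, (minn a b <= n <= maxn a b)%N & s n = 0.
Proof.
wlog a_le_b : a b / (a <= b)%N.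
  move=> hw s_step s_even sab; case/orP: (leq_total a b) => [a_le_b | b_le_a].
    exact: hw.
  by rewrite minnC maxnC; apply: hw; rewrite // mulrC.
wlog sa_le0 : s / s a <= 0.
  move=> hw s_step s_even sab; case/orP: (le_total (s a) 0) => [sa_le0 | sa_ge0].
    exact: hw.
  have [n n_ab /eqP] : exists2 n, (minn a b <= n <= maxn a b)%N & - s n = 0.
    apply: hw; rewrite ?oppr_le0 ?mulrNN // => n; first by rewrite -opprD normrN.
    by rewrite dvdzE abszN -dvdzE.
  by rewrite oppr_eq0 => /eqP; exists n.
rewrite (minn_idPl a_le_b) (maxn_idPr a_le_b) -(subnKC a_le_b) => s_step s_even sab.
have [sa0 | sa_neq0] := eqVneq (s a) 0; first by exists a; rewrite ?leqnn ?leq_addr.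
apply: even_walk_zero => //; rewrite sa_le0 /=.
by move: sab; rewrite nmulr_rle0 // lt_neqAle sa_neq0.
Qed.

Lemma shift_incr_lower_bound (a : nat -> int) k N : (0 < k)%N ->
  (forall y, `|a y| <= y%:Z) -> (forall y, (N <= y)%N -> a y + 1 <= a (y + k)%N) ->
  forall y, y%:Z - (k.+1 * (N + k))%N%:Z <= k%:Z * a y.
Proof.
move=> k_gt0 a_le a_incr; elim/ltn_ind => y IH.
(* The constant absorbs the range y < N + k, where only |a y| <= y is available. *)
have [y_small | y_large] := ltnP y (N + k).
  have /ler_normlP[ay_ge _] := a_le y.
  have : k%:Z * - y%:Z <= k%:Z * a y by rewrite ler_wpM2l // lerNl.
  have : (k.+1 * y <= k.+1 * (N + k))%N by rewrite leq_mul2l ltnW ?orbT.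
  nia.
have y_eq : (y - k + k)%N = y by rewrite subnK //; lia.
have incr : a (y - k)%N + 1 <= a y by rewrite -[in a y]y_eq a_incr //; lia.
have : k%:Z * (a (y - k)%N + 1) <= k%:Z * a y by rewrite ler_wpM2l.
have := IH (y - k)%N ltac:(lia); nia.
Qed.

Lemma liouville_window_nonpos k N eps : (0 < k)%N -> `|eps| = 1 ->
  exists2 n, (N < n)%N & eps * liouville_window k n <= 0.
Proof.
move=> k_gt0 eps_unit; apply: NNPP => no_n.
pose a y := eps * liouville_sum y.
have a_le y : `|a y| <= y%:Z by rewrite normrM eps_unit mul1r normr_liouville_sum.
have a_incr y : (N <= y)%N -> a y + 1 <= a (y + k)%N.
  move=> N_le_y; rewrite /a liouville_sum_addn mulrDr lerD2l.
  have : ~ (eps * liouville_window k y.+1 <= 0) by move=> le0; apply: no_n; exists y.+1.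
  lia.
set C := (k.+1 * (N + k))%N.
have [x D_gt] := divisor_summatory_superlinear (k + C).
have lower : (divisor_summatory x)%:Z - (x * C)%N%:Z <= k%:Z * (eps * liouville_floor_sum x).
  rewrite liouville_floor_sum_hyperbola !mulr_sumr.
  have -> : (divisor_summatory x)%:Z - (x * C)%N%:Z =
            \sum_(1 <= q < x.+1) ((x %/ q)%N%:Z - C%:Z).
    rewrite sumrB sumr_const_nat subn1 -(big_morph Posz PoszD erefl).
    by rewrite /= -mulr_natr natz -PoszM mulnC.
  by apply: ler_sum_nat => q _; exact: shift_incr_lower_bound _ _ _ k_gt0 a_le a_incr _.
have upper : k%:Z * (eps * liouville_floor_sum x) <= k%:Z * x%:Z.
  rewrite ler_wpM2l // (le_trans (ler_norm _)) // normrM eps_unit mul1r.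
  by have /andP[T_ge0 T_le] := liouville_floor_sum_ge0_le x; rewrite ger0_norm.
move: D_gt; rewrite -ltz_nat; lia.
Qed.

Theorem corollary5p1 (k : nat) (hk2 : (2 <= k)%N) (hkeven : ~~ odd k) :
  forall N : nat, exists n : nat,
    (N < n)%N /\ (0 < n)%N /\ \sum_(i < k) liouville (n + i) = 0.
Proof.
move=> N; have k_gt0 : (0 < k)%N by lia.
have window_even n : (2 %| liouville_window k n)%Z.
  rewrite -[liouville_window k n](subrK k%:Z) rpredD ?liouville_window_parity //.
  by rewrite dvdzE /= dvdn2.
have [a N_lt_a Sa] := liouville_window_nonpos k N 1 k_gt0 (normr1 _).
have [b N_lt_b Sb] := liouville_window_nonpos k N (-1) k_gt0 (normrN1 _).
rewrite mul1r in Sa; rewrite mulN1r oppr_le0 in Sb.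
have [n /andP[ab_le_n _] Sn] :=
  even_walk_sign_change _ _ _ (liouville_window_step k) window_even (mulr_le0_ge0 Sa Sb).
have : (N < minn a b)%N by rewrite leq_min N_lt_a N_lt_b.
by exists n; split; [lia | split; [lia | exact: Sn]].
Qed.
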